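(* For every integer $\nu\ge1$ the following identity of polynomials in $z$ holds: $$\sum_{i=0}^{2\nu-2}(-1)^iz^i\binom{2\nu-2}{i}\sum_{r=0}^{\nu}\frac{(-1)^r(-\frac32)^{\overline r}\Gamma(2\nu+\frac12-r)}{r!\,(\nu-r)!\,\Gamma(r-\frac12)\Gamma(\nu-r+\frac12)}\cdot\frac{(\frac32-r)^{\overline i}}{(\frac52-r)^{\overline i}}=\sum_{i=0}^{\nu-2}(-1)^iz^i\binom{2\nu-2}{i}\frac{(\nu-i-1)^{\overline\nu}(\frac32)^{\overline i}}{(-\frac12-i)^{\overline\nu}\,\Gamma(-\frac12)\,(\frac52)^{\overline i}}.$$
   Context: $(x)^{\overline i}=x(x+1)\cdots(x+i-1)$, $(x)^{\overline0}=1$, is the rising factorial; $\Gamma$ is the Gamma function (so $\Gamma(-\frac12)=-2\sqrt\pi$). *)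

From HB Require Import structures.
From mathcomp Require Import all_boot all_order all_algebra.
From mathcomp Require Import all_classical all_reals all_analysis.
Set Implicit Arguments. Unset Strict Implicit. Unset Printing Implicit Defensive.
Import Order.TTheory GRing.Theory Num.Theory.
Import numFieldNormedType.Exports.
Local Open Scope ring_scope.

Definition rising {R : pzRingType} (x : R) (i : nat) : R :=
  \prod_(k < i) (x + k%:R).

(* Euler's Gamma function on the reals, via the Gauss limit formula
   Gamma x = lim_{n -> oo} n! n^x / (x (x+1) ... (x+n)),
   valid for every real x that is not a nonpositive integer
   (in particular at all half-integers, which is all we need). *)
Definition Gamma {R : realType} (x : R) : R :=
  limn (fun n : nat => n`!%:R * (n%:R `^ x) / rising x n.+1).

(* Put x_r = r - 3/2.  Since (3/2-r)^{(i)}/(5/2-r)^{(i)} = (3/2-r)/(i-x_r), the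
   inner sum on the left is a sum of simple fractions a_r/(t-x_r) evaluated at
   t = i.  The Gamma functional equation at half-integers shows that
   a_r prod_{s<>r} (x_r - x_s) is the value at x_r of the degree-nu polynomial
   Q(t) = 3/2 Gamma(-1/2)^{-1} prod_{k<nu} (t-nu+1-k), so Lagrange interpolation
   at the nu+1 nodes x_r gives sum_r a_r/(t-x_r) = Q(t)/prod_s (t-x_s).  At
   t = i this vanishes for nu-1 <= i <= 2nu-2, and for i < nu-1 it is the
   coefficient on the right.  Gamma is never zero at half-integers because it
   is positive at 1/2, where the Gauss sequence is monotone and bounded. *)
From mathcomp Require Import all_boot all_order all_algebra.
From mathcomp Require Import all_classical all_reals all_analysis.
From mathcomp Require Import ring lra zify.
Import Order.TTheory GRing.Theory Num.Theory.
Import numFieldNormedType.Exports.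
Local Open Scope classical_set_scope.
Local Open Scope ring_scope.
Set Implicit Arguments. Unset Strict Implicit. Unset Printing Implicit Defensive.

Section RisingFactorial.
Variable R : pzRingType.
Implicit Types (x : R) (n : nat).

Lemma risingS x n : rising x n.+1 = rising x n * (x + n%:R).
Proof. by rewrite /rising big_ord_recr. Qed.

Lemma risingSl x n : rising x n.+1 = x * rising (x + 1) n.
Proof.
rewrite /rising big_ord_recl addr0; congr (_ * _); apply: eq_bigr => i _.
by rewrite /bump /= -addrA -natr1 (addrC 1).
Qed.

Lemma rising_shift x n : rising x n * (x + n%:R) = x * rising (x + 1) n.
Proof. by rewrite -risingS risingSl. Qed.

End RisingFactorial.

Lemma prod_subD_rising (R : comPzRingType) (t y : R) n :
  \prod_(k < n) (t - (y + k%:R)) = (-1) ^+ n * rising (y - t) n.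
Proof.
rewrite /rising; elim: n => [|n IH]; first by rewrite !big_ord0 mulr1.
by rewrite !big_ord_recr /= IH exprS; ring.
Qed.

Lemma rising_oppn_eq0 (R : comPzRingType) (k n : nat) :
  (k < n)%N -> rising (- k%:R : R) n = 0.
Proof. by move=> kn; rewrite /rising (bigD1 (Ordinal kn)) //= addNr mul0r. Qed.

Lemma natr_fact_neq0 (R : numDomainType) n : n`!%:R != 0 :> R.
Proof. by rewrite pnatr_eq0 -lt0n fact_gt0. Qed.

Lemma rising_gt0 (R : numDomainType) (x : R) n : 0 < x -> 0 < rising x n.
Proof. by move=> x_gt0; apply: prodr_gt0 => k _; rewrite ltr_wpDr. Qed.

Lemma rising_ratio (K : fieldType) (x : K) n :
  rising (x + 1) n != 0 -> x + n%:R != 0 ->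
  rising x n / rising (x + 1) n = x / (x + n%:R).
Proof. by move=> S_neq0 D_neq0; apply/eqP; rewrite eqr_div // rising_shift. Qed.

Section GammaFunctionalEquation.
Variable R : realType.
Implicit Types (x L : R) (n : nat).

Definition gamma_seq x n : R := n`!%:R * (n%:R `^ x) / rising x n.+1.

Lemma GammaE x : Gamma x = limn (gamma_seq x).
Proof. by []. Qed.

Lemma gamma_seqD1 x n : x != 0 -> (0 < n)%N ->
  gamma_seq (x + 1) n = gamma_seq x n * (x * n%:R / (x + n.+1%:R)).
Proof.
move=> x0 n0.
have e : rising (x + 1) n.+1 = x^-1 * (rising x n.+1 * (x + n.+1%:R)).
  by rewrite rising_shift mulrA mulVf // mul1r.
rewrite /gamma_seq e powRD; last by rewrite pnatr_eq0 -lt0n n0 implybT.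
rewrite powRr1 ?ler0n // !invfM invrK; ring.
Qed.

Lemma cvg_inv_natD (c : R) : (n%:R + c)^-1 @[n --> \oo] --> 0.
Proof.
rewrite -cvgrVy; last first.
  near=> n; rewrite invr_gt0.
  have : 1 - c <= n%:R by near: n; exact: nbhs_infty_ger.
  lra.
apply/cvgryPge => A; near=> n; rewrite /= invrK.
have : A - c <= n%:R by near: n; exact: nbhs_infty_ger.
lra.
Unshelve. all: by end_near.
Qed.

Lemma cvg_gamma_seq_ratio x : (x * n%:R / (x + n.+1%:R)) @[n --> \oo] --> x.
Proof.
have h : (x - x * (x + 1) * (n%:R + (x + 1))^-1) @[n --> \oo]
           --> x - x * (x + 1) * 0.
  by apply: cvgB; [exact: cvg_cst | apply: cvgMl_tmp; exact: cvg_inv_natD].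
rewrite mulr0 subr0 in h; apply: cvg_trans h; apply: near_eq_cvg.
near=> n.
have hn : 0 < n%:R + (x + 1).
  have : 1 - (x + 1) <= n%:R by near: n; exact: nbhs_infty_ger.
  lra.
rewrite -natr1 /=; field.
by rewrite addrA (addrC x) -addrA; exact: lt0r_neq0.
Unshelve. all: by end_near.
Qed.

Lemma cvg_gamma_seqD1 x L : x != 0 ->
  gamma_seq x @ \oo --> L -> gamma_seq (x + 1) @ \oo --> L * x.
Proof.
move=> x0 h; apply: (cvg_trans _ (cvgM h (@cvg_gamma_seq_ratio x))).
apply: near_eq_cvg; near=> n; rewrite /= gamma_seqD1 //.
by near: n; exact: nbhs_infty_gt.
Unshelve. all: by end_near.
Qed.

Lemma cvg_gamma_seqD1_inv x L : x != 0 ->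
  gamma_seq (x + 1) @ \oo --> L -> gamma_seq x @ \oo --> L * x^-1.
Proof.
move=> x0 h; apply: (cvg_trans _ (cvgM h (cvgV x0 (@cvg_gamma_seq_ratio x)))).
apply: near_eq_cvg; near=> n.
have n0 : (0 < n)%N by near: n; exact: nbhs_infty_gt.
have hn : 1 - x <= n%:R by near: n; exact: nbhs_infty_ger.
rewrite /= gamma_seqD1 // mulfK //.
rewrite mulf_neq0 ?invr_eq0 ?mulf_neq0 ?pnatr_eq0 -?lt0n //.
by rewrite -natr1; apply: lt0r_neq0; lra.
Unshelve. all: by end_near.
Qed.

Lemma is_cvgn_gamma_seqD1 x : x != 0 ->
  cvgn (gamma_seq x) <-> cvgn (gamma_seq (x + 1)).
Proof.
move=> x0; split => /cvg_ex [L hL].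
- exact: cvgP (cvg_gamma_seqD1 x0 hL).
- exact: cvgP (cvg_gamma_seqD1_inv x0 hL).
Qed.

Lemma GammaD1 x : x != 0 -> cvgn (gamma_seq x) -> Gamma (x + 1) = x * Gamma x.
Proof.
move=> x0 /cvg_ex [L hL].
by rewrite !GammaE (cvg_lim _ (cvg_gamma_seqD1 x0 hL)) // (cvg_lim _ hL) // mulrC.
Qed.

End GammaFunctionalEquation.

Section GammaHalf.
Variable R : realType.

Definition wallis_seq (n : nat) : R := (n`!%:R / rising (1 / 2 : R) n.+1) ^+ 2.

Lemma wallis_seqS n :
  wallis_seq n.+1 = wallis_seq n * ((n%:R + 1) / (n%:R + 3 / 2)) ^+ 2.
Proof.
rewrite /wallis_seq -exprMn risingS factS natrM -natr1.
have h1 : 0 < rising (1 / 2 : R) n.+1 by exact: rising_gt0.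
have h2 : 0 < n%:R + 3 / 2 :> R by apply: ltr_pwDr => //; exact: ler0n.
set P := rising _ n.+1 in h1 *.
congr (_ ^+ 2); rewrite -natr1; field.
by rewrite (lt0r_neq0 h1) andbT; apply/negP => /eqP h; lra.
Qed.

Lemma wallis_seq_bound n : wallis_seq n * (n%:R + 1) <= 4.
Proof.
elim: n => [|n IH].
  by rewrite /wallis_seq /rising big_ord1 fact0 addr0 mul1r; lra.
apply: le_trans IH; rewrite wallis_seqS -mulrA; apply: ler_wpM2l; first exact: sqr_ge0.
have t0 : 0 <= n%:R :> R by exact: ler0n.
set t : R := n%:R in t0 *.
have h2 : 0 < (t + 3 / 2) ^+ 2 by apply: exprn_gt0; lra.
rewrite -natr1 -/t expr_div_n mulrAC ler_pdivrMr //; nra.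
Qed.

Lemma gamma_seq_half_ge0 n : 0 <= gamma_seq (1 / 2 : R) n.
Proof.
apply: divr_ge0; last exact/ltW/rising_gt0.
by apply: mulr_ge0 => //; exact: powR_ge0.
Qed.

Lemma sqr_gamma_seq_half n : gamma_seq (1 / 2 : R) n ^+ 2 = wallis_seq n * n%:R.
Proof.
rewrite /gamma_seq /wallis_seq div1r powR12_sqrt ?ler0n //.
by rewrite !expr_div_n exprMn sqr_sqrtr ?ler0n //; ring.
Qed.

Lemma gamma_seq_half_nd : nondecreasing_seq (gamma_seq (1 / 2 : R)).
Proof.
apply/nondecreasing_seqP => n.
have h0 := gamma_seq_half_ge0 n; have h1 := gamma_seq_half_ge0 n.+1.
suff : gamma_seq (1 / 2 : R) n ^+ 2 <= gamma_seq (1 / 2 : R) n.+1 ^+ 2 by nra.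
rewrite !sqr_gamma_seq_half wallis_seqS -mulrA.
apply: ler_wpM2l; first exact: sqr_ge0.
have t0 : 0 <= n%:R :> R by exact: ler0n.
set t : R := n%:R in t0 *.
have h2 : 0 < (t + 3 / 2) ^+ 2 by apply: exprn_gt0; lra.
rewrite -natr1 -/t expr_div_n mulrAC ler_pdivlMr //; nra.
Qed.

Lemma gamma_seq_half_le2 n : gamma_seq (1 / 2 : R) n <= 2.
Proof.
have h0 := gamma_seq_half_ge0 n.
suff : gamma_seq (1 / 2 : R) n ^+ 2 <= 4 by nra.
rewrite sqr_gamma_seq_half; apply: le_trans (wallis_seq_bound n).
by apply: ler_wpM2l; [exact: sqr_ge0 | lra].
Qed.

Lemma is_cvgn_gamma_seq_half : cvgn (gamma_seq (1 / 2 : R)).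
Proof.
apply: nondecreasing_is_cvgn; first exact: gamma_seq_half_nd.
by exists 2 => _ [n _ <-]; exact: gamma_seq_half_le2.
Qed.

Lemma Gamma_half_gt0 : 0 < Gamma (1 / 2 : R).
Proof.
apply: (@lt_le_trans _ _ (gamma_seq (1 / 2 : R) 1)); last first.
  exact: nondecreasing_cvgn_le gamma_seq_half_nd is_cvgn_gamma_seq_half 1.
apply: divr_gt0; last exact: rising_gt0.
by apply: mulr_gt0 => //; apply: powR_gt0.
Qed.

End GammaHalf.

Definition halfint {R : realFieldType} (k : int) : R := k%:~R + 1 / 2.

Lemma halfint_neq0 (R : realFieldType) k : halfint k != 0 :> R.
Proof.
apply/negP => /eqP h.
have : ((2 * k + 1)%:~R : R) = 0.
  by rewrite intrD intrM /=; move: h; rewrite /halfint; lra.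
by move/eqP; rewrite intr_eq0; lia.
Qed.

Lemma halfintDn (R : realFieldType) k (n : nat) :
  halfint k + n%:R = halfint (k + n%:Z) :> R.
Proof. by rewrite /halfint intrD /=; ring. Qed.

Lemma halfintD1 (R : realFieldType) k : halfint k + 1 = halfint (k + 1) :> R.
Proof. by rewrite /halfint intrD /=; ring. Qed.

Lemma halfint_natB (R : realFieldType) (m n : nat) :
  halfint (m%:Z - n%:Z) = m%:R - n%:R + 1 / 2 :> R.
Proof. by rewrite /halfint intrB. Qed.

Lemma halfintN1 (R : realFieldType) : halfint (-1) = - (1 / 2) :> R.
Proof. by rewrite /halfint rmorphN1; lra. Qed.

Lemma rising_halfint_neq0 (R : realFieldType) k n : rising (halfint k) n != 0 :> R.
Proof. by apply/prodf_neq0 => i _; rewrite halfintDn halfint_neq0. Qed.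

Section GammaHalfInteger.
Variable R : realType.

Lemma is_cvgn_gamma_seq_halfint k : cvgn (gamma_seq (halfint k : R)).
Proof.
elim/int_rect: k => [|n IH|n IH].
- by rewrite /halfint add0r; exact: is_cvgn_gamma_seq_half.
- rewrite -addn1 PoszD -halfintD1.
  exact/(is_cvgn_gamma_seqD1 (halfint_neq0 R n)).1.
- apply/(is_cvgn_gamma_seqD1 (halfint_neq0 R _)).2; rewrite halfintD1.
  by have -> : (- (n.+1 : int) + 1 = - (n : int))%R by rewrite -addn1 PoszD; ring.
Qed.

Lemma Gamma_halfintD1 k :
  Gamma (halfint (k + 1) : R) = halfint k * Gamma (halfint k).
Proof. by rewrite -halfintD1 GammaD1 ?halfint_neq0 //; exact: is_cvgn_gamma_seq_halfint. Qed.

Lemma Gamma_halfint_neq0 k : Gamma (halfint k : R) != 0.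
Proof.
elim/int_rect: k => [|n IH|n IH].
- by rewrite /halfint add0r; apply: lt0r_neq0; exact: Gamma_half_gt0.
- by rewrite -addn1 PoszD Gamma_halfintD1 mulf_neq0 // halfint_neq0.
- move: IH; have -> : (- (n : int) = - (n.+1 : int) + 1)%R.
    by rewrite -addn1 PoszD; ring.
  by rewrite Gamma_halfintD1 mulf_eq0 negb_or => /andP [].
Qed.

Lemma Gamma_halfintDn k n :
  Gamma (halfint k + n%:R : R) = rising (halfint k) n * Gamma (halfint k).
Proof.
elim: n => [|n IH]; first by rewrite addr0 /rising big_ord0 mul1r.
by rewrite risingS -natr1 addrA halfintDn halfintD1 Gamma_halfintD1 -halfintDn IH; ring.
Qed.

End GammaHalfInteger.

Lemma horner_prod_XsubC (R : comNzRingType) (I : finType) (P : pred I) (x : I -> R) t :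
  (\prod_(j | P j) ('X - (x j)%:P)).[t] = \prod_(j | P j) (t - x j).
Proof. by rewrite horner_prod; apply: eq_bigr => j _; rewrite hornerXsubC. Qed.

Lemma partial_fractions (K : fieldType) n (x : nat -> K) (Q : {poly K}) t :
  (0 < n)%N -> injective x -> (size Q <= n)%N -> (forall j : 'I_n, t != x j) ->
  Q.[t] / \prod_(j < n) (t - x j)
    = \sum_(i < n) Q.[x i] / (\prod_(j < n | j != i) (x i - x j) * (t - x i)).
Proof.
move=> n_gt0 x_inj sQ tx.
rewrite [in LHS](lagrange_gen n_gt0 x_inj sQ) horner_sum mulr_suml.
apply: eq_bigr => i _.
rewrite (lagrangeE n_gt0 x_inj) /= !hornerCM !horner_prod_XsubC.
rewrite [\prod_(j < n) _](bigD1 i) //=.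
have P_neq0 : \prod_(j < n | j != i) (t - x j) != 0.
  by apply/prodf_neq0 => j _; rewrite subr_eq0.
have D_neq0 : \prod_(j < n | j != i) (x i - x j) != 0.
  by apply/prodf_neq0 => j ji; rewrite subr_eq0 (inj_eq x_inj) eq_sym.
have ti : t - x i != 0 by rewrite subr_eq0.
by field; rewrite P_neq0 D_neq0 ti.
Qed.

Lemma prod_natB (R : comPzRingType) n : \prod_(s < n) (n%:R - s%:R : R) = n`!%:R.
Proof.
elim: n => [|n IH]; first by rewrite big_ord0.
rewrite big_ord_recl subr0 factS natrM; congr (_ * _).
by rewrite -IH; apply: eq_bigr => s _; rewrite /= /bump /= -!natr1; ring.
Qed.

Lemma prod_natB_neq (R : comPzRingType) n (r : 'I_n.+1) :
  \prod_(s < n.+1 | s != r) (r%:R - s%:R : R)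
  = (-1) ^+ (n - r) * (r`! * (n - r)`!)%:R.
Proof.
under eq_bigl => s do rewrite -(inj_eq val_inj).
case: r => r /=; rewrite ltnS => /subnKC <-; rewrite addKn.
elim: (n - r)%N => [|m IH].
  rewrite addn0 big_mkcond big_ord_recr /= eqxx mulr1 fact0 muln1 expr0 mul1r.
  rewrite -prod_natB; apply: eq_bigr => s _.
  by rewrite /= (ltn_eqF (ltn_ord s)).
rewrite addnS big_mkcond big_ord_recr /= -big_mkcond /= IH.
rewrite gtn_eqF ?ltnS ?leq_addr //=.
by rewrite exprS factS !natrM -natr1 natrD; ring.
Qed.

Section SimpleFractions.
Variables (R : realType) (nu : nat).

Definition Acoef (r : nat) : R :=
  (-1) ^+ r * rising (- (3 / 2) : R) r * Gamma ((2 * nu)%:R + 1 / 2 - r%:R)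
  / (r`!%:R * (nu - r)`!%:R * Gamma (r%:R - 1 / 2) * Gamma (nu%:R - r%:R + 1 / 2)).

Definition node (r : nat) : R := - (3 / 2) + r%:R.

Definition Qpoly : {poly R} :=
  (3 / 2 / Gamma (- (1 / 2))) *: \prod_(k < nu) ('X - (nu%:R - 1 + k%:R)%:P).

Lemma node_inj : injective node.
Proof. by move=> r s /addrI /eqP; rewrite eqr_nat => /eqP. Qed.

Lemma size_Qpoly : (size Qpoly <= nu.+1)%N.
Proof.
apply: leq_trans (size_scale_leq _ _) _.
rewrite size_prod => [|k _]; last by rewrite polyXsubC_eq0.
under eq_bigr do rewrite size_XsubC.
by rewrite sum_nat_const card_ord; lia.
Qed.

Lemma horner_Qpoly t :
  Qpoly.[t] = 3 / 2 / Gamma (- (1 / 2)) * ((-1) ^+ nu * rising (nu%:R - 1 - t) nu).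
Proof. by rewrite hornerZ horner_prod_XsubC prod_subD_rising. Qed.

Lemma Acoef_closed (r : nat) : (r <= nu)%N ->
  Acoef r * (3 / 2 - r%:R) = (-1) ^+ r * (3 / 2 / Gamma (- (1 / 2)))
    * rising (halfint (nu%:Z - r%:Z)) nu / (r`! * (nu - r)`!)%:R.
Proof.
move=> r_le_nu; set h : R := halfint (nu%:Z - r%:Z).
have hE : h = nu%:R - r%:R + 1 / 2 by rewrite /h halfint_natB.
have e1 : (2 * nu)%:R + 1 / 2 - r%:R = h + nu%:R :> R by rewrite hE natrM; ring.
have e2 : r%:R - 1 / 2 = halfint (-1) + r%:R :> R by rewrite halfintN1; ring.
have u_neq0 : 3 / 2 - r%:R != 0 :> R.
  by rewrite (_ : _ - _ = halfint (1%:Z - r%:Z)) ?halfint_neq0 // halfint_natB; lra.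
have shift : rising (- (3 / 2) : R) r
             = 3 / 2 * rising (halfint (-1)) r / (3 / 2 - r%:R).
  apply/(canRL (mulfK u_neq0)).
  have -> : 3 / 2 - r%:R = - (- (3 / 2) + r%:R) :> R by ring.
  rewrite mulrN rising_shift halfintN1 (_ : - (3 / 2) + 1 = - (1 / 2) :> R); lra.
rewrite /Acoef e1 e2 -hE !Gamma_halfintDn -halfintN1 shift.
have := Gamma_halfint_neq0 R (nu%:Z - r%:Z); rewrite -/h => Gh_neq0.
have := Gamma_halfint_neq0 R (-1) => G_neq0.
have := rising_halfint_neq0 R (-1) r => S_neq0.
field; rewrite !natr_fact_neq0 G_neq0 Gh_neq0 S_neq0 /=.
by apply: contra u_neq0 => /eqP u0; apply/eqP; lra.
Qed.

Lemma natr_sub_node_neq0 i r : i%:R - node r != 0.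
Proof.
rewrite (_ : _ - _ = halfint ((i + 1)%:Z - r%:Z)) ?halfint_neq0 //.
by rewrite halfint_natB natrD /node; lra.
Qed.

Lemma Acoef_rising_ratio (r : 'I_nu.+1) i :
  Acoef r * (rising (3 / 2 - r%:R) i / rising (5 / 2 - r%:R) i)
  = Qpoly.[node r] / (\prod_(s < nu.+1 | s != r) (node r - node s) * (i%:R - node r)).
Proof.
have r_le_nu : (r <= nu)%N by rewrite -ltnS.
have d_neq0 := natr_sub_node_neq0 i r.
have ratio : rising (3 / 2 - r%:R) i / rising (5 / 2 - r%:R) i
             = (3 / 2 - r%:R) / (i%:R - node r).
  have e5 : 5 / 2 - r%:R = 3 / 2 - r%:R + 1 :> R by lra.
  rewrite e5 rising_ratio; last first.
  - by rewrite /node in d_neq0 *; apply: contra d_neq0 => /eqP e; apply/eqP; lra.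
  - rewrite -e5 (_ : _ - _ = halfint (2%:Z - r%:Z)) ?rising_halfint_neq0 //.
    by rewrite halfint_natB; lra.
  by congr (_ / _); rewrite /node; lra.
have node_sub s : node r - node s = r%:R - s%:R :> R by rewrite /node; ring.
under eq_bigr => s _ do rewrite node_sub.
rewrite prod_natB_neq ratio mulrA Acoef_closed // horner_Qpoly.
have -> : nu%:R - 1 - node r = halfint (nu%:Z - r%:Z) by rewrite halfint_natB /node; lra.
have -> : (-1) ^+ nu = (-1) ^+ r * (-1) ^+ (nu - r) :> R by rewrite -exprD subnKC.
have G_neq0 : Gamma (- (1 / 2)) != 0 :> R by rewrite -halfintN1 Gamma_halfint_neq0.
have sg_neq0 : (-1) ^+ (nu - r) != 0 :> R by rewrite signr_eq0.
by field; rewrite d_neq0 !natr_fact_neq0 sg_neq0 G_neq0.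
Qed.

Lemma sum_Acoef_rising_ratio i : (1 <= nu)%N -> (i <= 2 * nu - 2)%N ->
  \sum_(r < nu.+1) Acoef r * (rising (3 / 2 - r%:R) i / rising (5 / 2 - r%:R) i)
  = if (i < nu.-1)%N then
      rising ((nu - i - 1)%:R : R) nu * rising (3 / 2 : R) i
        / (rising (- (1 / 2) - i%:R) nu * Gamma (- (1 / 2) : R) * rising (5 / 2 : R) i)
    else 0.
Proof.
move=> nu_gt0 i_le.
under eq_bigr => r _ do rewrite Acoef_rising_ratio.
rewrite -(partial_fractions _ node_inj size_Qpoly) //; last first.
  by move=> j; rewrite -subr_eq0 natr_sub_node_neq0.
rewrite horner_Qpoly prod_subD_rising risingSl.
rewrite (_ : - (3 / 2) - i%:R + 1 = - (1 / 2) - i%:R :> R); last by lra.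
case: ltnP => [i_lt | i_ge]; last first.
  rewrite (_ : nu%:R - 1 - i%:R = - (i + 1 - nu)%:R :> R).
    by rewrite rising_oppn_eq0 ?mulr0 ?mul0r //; lia.
  by rewrite natrB ?natrD; [lra | lia].
rewrite (_ : nu%:R - 1 - i%:R = (nu - i - 1)%:R :> R); last first.
  by rewrite !natrB; [lra | lia | lia].
have r5 : rising (5 / 2 : R) i = rising (3 / 2) i * (3 / 2 + i%:R) / (3 / 2).
  by rewrite rising_shift (_ : 3 / 2 + 1 = 5 / 2 :> R); [field | lra].
have G_neq0 : Gamma (- (1 / 2)) != 0 :> R by rewrite -halfintN1 Gamma_halfint_neq0.
have S1_neq0 : rising (- (1 / 2) - i%:R) nu != 0 :> R.
  rewrite (_ : _ - _ = halfint (0%:Z - (i + 1)%:Z)) ?rising_halfint_neq0 //.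
  by rewrite halfint_natB natrD; lra.
have S2_neq0 : rising (3 / 2) i != 0 :> R.
  rewrite (_ : 3 / 2 = halfint (1%:Z - 0%:Z)) ?rising_halfint_neq0 //.
  by rewrite halfint_natB; lra.
have i_ge0 : 0 <= i%:R :> R by exact: ler0n.
rewrite r5 exprS; field.
by rewrite S1_neq0 S2_neq0 G_neq0 signr_eq0 lt0r_neq0 ?ltr0_neq0 //; lra.
Qed.

End SimpleFractions.

Unset Implicit Arguments.

Theorem mainTheorem14 (R : realType) (nu : nat) (hnu : (1 <= nu)%N) :
  \sum_(i < (2 * nu - 2).+1)
     (((-1) ^+ i * 'C(2 * nu - 2, i)%:R *
       \sum_(r < nu.+1)
          ((-1) ^+ r * rising (- (3 / 2) : R) r
             * Gamma ((2 * nu)%:R + 1 / 2 - r%:R)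
           / (r`!%:R * (nu - r)`!%:R * Gamma (r%:R - 1 / 2)
                * Gamma (nu%:R - r%:R + 1 / 2))
           * (rising (3 / 2 - r%:R) i / rising (5 / 2 - r%:R) i)))
      *: 'X^i : {poly R})
  =
  \sum_(i < nu.-1)
     (((-1) ^+ i * 'C(2 * nu - 2, i)%:R *
       (rising ((nu - i - 1)%:R : R) nu * rising (3 / 2 : R) i
        / (rising (- (1 / 2) - i%:R) nu * Gamma (- (1 / 2) : R)
           * rising (5 / 2 : R) i)))
      *: 'X^i : {poly R}).
Proof.
pose rhs_term (i : nat) : {poly R} := ((-1) ^+ i * 'C(2 * nu - 2, i)%:R *
       (rising ((nu - i - 1)%:R : R) nu * rising (3 / 2 : R) i
        / (rising (- (1 / 2) - i%:R) nu * Gamma (- (1 / 2) : R)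
           * rising (5 / 2 : R) i))) *: 'X^i.
have nu_le : (nu.-1 <= (2 * nu - 2).+1)%N by lia.
rewrite (big_ord_widen _ rhs_term nu_le) [RHS]big_mkcond /=.
apply: eq_bigr => i _.
have := @sum_Acoef_rising_ratio R nu i hnu (_ : (i <= 2 * nu - 2)%N).
rewrite /Acoef => ->; last by rewrite -ltnS.
by rewrite /rhs_term; case: ifP => // _; rewrite mulr0 scale0r.
Qed.
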